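(* Let $S$ be a discrete set, $N\ge 1$, and let $\{P_\theta\}_{\theta}$ be a family of probability distributions on $S^N$. Let $s^1,\dots,s^L\in S^N$ be any $L$ data points, with empirical distribution $\hat P_L(s)=\frac1L\sum_{\mu=1}^L\delta_{s,s^\mu}$. For each $i\in\{1,\dots,N\}$ define the Shannon entropy of the empirical marginal $$H_i(\hat P_L)=-\sum_{s_{-i}}\hat P_L(s_{-i})\ln \hat P_L(s_{-i}),\qquad \hat P_L(s_{-i})=\sum_{s_i}\hat P_L(s).$$ Then for every parameter $\theta$, $$\mathcal{PL}_L(\theta)-\sum_{i=1}^N H_i(\hat P_L)\;\ge\; N\,\mathcal{L}_L(\theta),$$ where $\mathcal{L}_L(\theta)=\frac1L\sum_{\mu=1}^L\log P_\theta(s^\mu)$ and $\mathcal{PL}_L(\theta)=\frac1L\sum_{\mu=1}^L\sum_{i=1}^N\log P_\theta(s^\mu_i\mid s^\mu_{-i})$.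
   Context: For $s=(s_1,\dots,s_N)$ write $s_{-i}=(s_1,\dots,s_{i-1},s_{i+1},\dots,s_N)$. The conditional distribution is $P_\theta(s_i\mid s_{-i})=P_\theta(s)/\sum_{s_i}P_\theta(s)$ (assumed well defined, i.e. the marginals $P_\theta(s_{-i})=\sum_{s_i}P_\theta(s)$ are positive where needed); $\log=\ln$ is the natural logarithm, with the convention $\log 0=-\infty$ and $0\log 0=0$. $\delta_{s,s^\mu}$ is the Kronecker delta. $\mathcal{L}_L$ is the (normalised) log-likelihood and $\mathcal{PL}_L$ the pseudo-log-likelihood. *)

From HB Require Import structures.
From mathcomp Require Import all_boot all_order all_algebra.
From mathcomp Require Import all_classical all_reals all_analysis.
Set Implicit Arguments. Unset Strict Implicit. Unset Printing Implicit Defensive.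
Import Order.TTheory GRing.Theory Num.Theory.
Local Open Scope ring_scope.

Definition config (S : finType) (N : nat) := {ffun 'I_N -> S}.

Definition rconfig (S : finType) (N : nat) (i : 'I_N) :=
  {ffun {j : 'I_N | j != i} -> S}.

Definition rest (S : finType) (N : nat) (i : 'I_N) (s : config S N)
  : rconfig S i := [ffun j => s (val j)].

Definition marg (R : realType) (S : finType) (N : nat) (i : 'I_N)
  (P : config S N -> R) (r : rconfig S i) : R :=
  \sum_(s : config S N | rest i s == r) P s.

Definition condP (R : realType) (S : finType) (N : nat) (i : 'I_N)
  (P : config S N -> R) (s : config S N) : R :=
  P s / @marg R S N i P (rest i s).

Definition elog (R : realType) (x : R) : \bar R :=
  if 0 < x then (ln x)%:E else -oo%E.

Definition xlnx (R : realType) (x : R) : R := if 0 < x then x * ln x else 0.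

Definition empirical (R : realType) (S : finType) (N L : nat)
  (data : 'I_L -> config S N) (s : config S N) : R :=
  L%:R^-1 * \sum_(mu < L) (s == data mu)%:R.

Definition Hi (R : realType) (S : finType) (N L : nat)
  (data : 'I_L -> config S N) (i : 'I_N) : R :=
  - \sum_(r : rconfig S i) xlnx (@marg R S N i (empirical R data) r).

Definition loglik (R : realType) (S : finType) (N L : nat)
  (P : config S N -> R) (data : 'I_L -> config S N) : \bar R :=
  ((L%:R^-1 : R)%:E * \sum_(mu < L) elog (P (data mu)))%E.

Definition pseudologlik (R : realType) (S : finType) (N L : nat)
  (P : config S N -> R) (data : 'I_L -> config S N) : \bar R :=
  ((L%:R^-1 : R)%:E *
     \sum_(mu < L) \sum_(i < N) elog (@condP R S N i P (data mu)))%E.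

(** The gap [PL - sum_i H_i - N L] splits, coordinate by coordinate, into
    [sum_{s_{-i}} Q_i ln Q_i - (1/L) sum_mu ln P_i(s^mu_{-i})], where [Q_i] and
    [P_i] are the empirical and the model marginals on [s_{-i}]; this is the
    relative entropy of [Q_i] with respect to [P_i], nonnegative by Gibbs'
    inequality.  If the model gives zero mass to a data point, the
    log-likelihood is [-oo] and there is nothing to prove. *)

From HB Require Import structures.
From mathcomp Require Import all_boot all_order all_algebra.
From mathcomp Require Import all_classical all_reals all_analysis.
From mathcomp Require Import ring lra.
Set Implicit Arguments. Unset Strict Implicit.
Import Order.TTheory GRing.Theory Num.Theory.
Local Open Scope ring_scope.

Section Gibbs.
Variable R : realType.

Lemma mul_ln_le_xlnx (q m : R) : 0 <= q -> 0 <= m -> (0 < q -> 0 < m) ->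
  q * ln m <= xlnx q + m - q.
Proof.
move=> q0 m0 qm; rewrite /xlnx; case: ifPn => [qp|]; last first.
  rewrite -leNgt => qle; have -> : q = 0 by apply/le_anti/andP.
  by rewrite mul0r add0r subr0.
have mp := qm qp.
have ln_le : ln (m / q) <= m / q - 1.
  have := @le_ln1Dx R (m / q - 1); rewrite addrCA subrr addr0; apply.
  by rewrite ltrBrDl addrC addNr divr_gt0.
rewrite ln_div ?posrE // in ln_le.
have := ler_wpM2l (ltW qp) ln_le.
rewrite !mulrBr mulr1 mulrCA divff ?gt_eqF // mulr1; lra.
Qed.

Lemma gibbs_inequality (T : finType) (Q M : T -> R) :
  (forall t, 0 <= Q t) -> (forall t, 0 <= M t) ->
  (forall t, 0 < Q t -> 0 < M t) -> \sum_t M t <= \sum_t Q t ->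
  \sum_t Q t * ln (M t) <= \sum_t xlnx (Q t).
Proof.
move=> Q0 M0 QM sumMQ.
apply: (@le_trans _ _ (\sum_t (xlnx (Q t) + M t - Q t))).
  by apply: ler_sum => t _; apply: mul_ln_le_xlnx (Q0 t) (M0 t) (QM t).
rewrite sumrB big_split /=; lra.
Qed.

End Gibbs.

Section Marginals.
Variables (R : realType) (S : finType) (N : nat) (i : 'I_N).

Lemma marg_ge0 (P : config S N -> R) r :
  (forall s, 0 <= P s) -> 0 <= @marg R S N i P r.
Proof. by move=> P0; rewrite /marg sumr_ge0. Qed.

Lemma sum_marg (P : config S N -> R) :
  \sum_(r : rconfig S i) @marg R S N i P r = \sum_(s : config S N) P s.
Proof. by rewrite (partition_big (rest i) xpredT). Qed.

End Marginals.

Section Empirical.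
Variables (R : realType) (S : finType) (N L : nat).
Variable data : 'I_L -> config S N.

Lemma empirical_ge0 s : 0 <= empirical R data s.
Proof. by rewrite /empirical mulr_ge0 ?invr_ge0 // sumr_ge0. Qed.

Lemma sum_empirical : (0 < L)%N -> \sum_(s : config S N) empirical R data s = 1.
Proof.
move=> L_gt0; rewrite /empirical -big_distrr /= exchange_big /=.
rewrite (eq_bigr (fun _ => 1)) => [|mu _]; last first.
  by rewrite (bigD1 (data mu)) //= eqxx big1 ?addr0 // => s /negbTE ->.
by rewrite sumr_const card_ord mulVf // pnatr_eq0 -lt0n.
Qed.

Lemma marg_empirical (i : 'I_N) r :
  @marg R S N i (empirical R data) r =
  L%:R^-1 * \sum_(mu < L) (rest i (data mu) == r)%:R.
Proof.
rewrite /marg /empirical -big_distrr /= exchange_big /=; congr (_ * _).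
apply: eq_bigr => mu _; rewrite big_mkcond (bigD1 (data mu)) //= eqxx.
rewrite big1 ?addr0 => [|s /negbTE ->]; by case: (_ == r).
Qed.

Lemma marg_empirical_gt0 (i : 'I_N) r :
  0 < @marg R S N i (empirical R data) r -> exists mu, rest i (data mu) = r.
Proof.
move=> Q_gt0; apply: contrapT => no_mu; move: Q_gt0.
rewrite marg_empirical big1 ?mulr0 ?ltxx // => mu _.
by case: eqP => // rest_mu; case: no_mu; exists mu.
Qed.

Lemma mean_rest_empirical (i : 'I_N) (f : rconfig S i -> R) :
  L%:R^-1 * \sum_(mu < L) f (rest i (data mu)) =
  \sum_(r : rconfig S i) @marg R S N i (empirical R data) r * f r.
Proof.
rewrite (partition_big (fun mu => rest i (data mu)) xpredT) //= big_distrr /=.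
apply: eq_bigr => r _; rewrite marg_empirical -mulrA big_distrl /= big_mkcond.
by congr (_ * _); apply: eq_bigr => mu _; case: eqP => [->|_]; rewrite ?mul1r ?mul0r.
Qed.

Lemma mean_ln_marg_le_oppHi (P : config S N -> R) (i : 'I_N) :
  (0 < L)%N -> (forall s, 0 <= P s) -> \sum_s P s = 1 ->
  (forall mu, 0 < @marg R S N i P (rest i (data mu))) ->
  L%:R^-1 * \sum_(mu < L) ln (@marg R S N i P (rest i (data mu))) <=
  - Hi R data i.
Proof.
move=> L_gt0 P0 P1 Pdata.
rewrite (mean_rest_empirical (fun r => ln (@marg R S N i P r))) /Hi opprK.
apply: gibbs_inequality => [r|r|r /marg_empirical_gt0 [mu <-]|].
- exact/marg_ge0/empirical_ge0.
- exact: marg_ge0.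
- exact: Pdata.
by rewrite !sum_marg P1 sum_empirical.
Qed.

End Empirical.

Section Likelihoods.
Variables (R : realType) (S : finType) (N L : nat).
Variables (P : config S N -> R) (data : 'I_L -> config S N).

Lemma loglik_fin : (forall mu, 0 < P (data mu)) ->
  loglik P data = (L%:R^-1 * \sum_(mu < L) ln (P (data mu)))%:E.
Proof.
move=> Pdata; rewrite /loglik EFinM -sumEFin.
by congr (_ * _)%E; apply: eq_bigr => mu _; rewrite /elog Pdata.
Qed.

Lemma pseudologlik_fin : (forall mu, 0 < P (data mu)) ->
  (forall mu i, 0 < @marg R S N i P (rest i (data mu))) ->
  pseudologlik P data =
  (N%:R * (L%:R^-1 * \sum_(mu < L) ln (P (data mu))) -
   \sum_(i < N) L%:R^-1 * \sum_(mu < L) ln (@marg R S N i P (rest i (data mu))))%:E.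
Proof.
move=> Pdata Pmarg; rewrite /pseudologlik.
under eq_bigr => mu _ do under eq_bigr => i _ do
  rewrite /elog /condP divr_gt0 // ln_div ?posrE //.
under eq_bigr => mu _ do rewrite sumEFin.
rewrite sumEFin -EFinM; congr (_%:E).
under eq_bigr => mu _ do rewrite sumrB sumr_const card_ord -mulr_natl.
by rewrite sumrB -mulr_sumr exchange_big -mulr_sumr mulrBr mulrCA.
Qed.

Lemma loglik_eqNy mu : (0 < L)%N -> ~ 0 < P (data mu) -> loglik P data = -oo%E.
Proof.
move=> L_gt0 /negP Pmu; rewrite /loglik.
have -> : (\sum_(nu < L) elog (P (data nu)))%E = -oo%E.
  by apply/eqP; rewrite esum_eqNy; apply/existsP; exists mu; rewrite /elog (negbTE Pmu).
by rewrite gt0_muleNy // lte_fin invr_gt0 ltr0n.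
Qed.

End Likelihoods.

Theorem mainTheorem1 (R : realType) (S : finType) (N L : nat)
  (Theta : Type) (P : Theta -> config S N -> R)
  (hN : (1 <= N)%N) (hL : (1 <= L)%N)
  (hP0 : forall th s, 0 <= P th s)
  (hP1 : forall th, \sum_(s : config S N) P th s = 1)
  (data : 'I_L -> config S N)
  (th : Theta)
  (hmarg : forall (mu : 'I_L) (i : 'I_N),
      0 < @marg R S N i (P th) (rest i (data mu))) :
  (pseudologlik (P th) data - (\sum_(i < N) Hi R data i)%:E
     >= (N%:R : R)%:E * loglik (P th) data)%E.
Proof.
have [Pdata|/existsNP [mu Pmu]] := pselect (forall mu, 0 < P th (data mu)).
  rewrite loglik_fin // pseudologlik_fin // -EFinM -EFinB lee_fin.
  have entropy_bound : \sum_(i < N) L%:R^-1 *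
      \sum_(mu < L) ln (@marg R S N i (P th) (rest i (data mu))) <=
      - \sum_(i < N) Hi R data i.
    by rewrite -sumrN; apply: ler_sum => i _; apply: mean_ln_marg_le_oppHi.
  lra.
by rewrite (loglik_eqNy hL Pmu) gt0_muleNy ?leNye // lte_fin ltr0n.
Qed.
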